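(* Let $a>-1$, $C>0$ and $c>0$ be constants. Let $g:[0,1]\to\mathbb{R}$ be a function of the form $g(x)=\sum_{n=1}^\infty g_nx^n$ with $|g_n|\le Cn^a$ for all $n\ge1$. Let $P\ge1$ and let $\hat x_1,\dots,\hat x_P$ be the Chebyshev nodes of the first kind shifted and scaled to the interval $[0,1/(1+c)]$, i.e. $\hat x_i=\frac{1+\cos\left(\frac{(2i-1)\pi}{2P}\right)}{2(1+c)}$. Let $\epsilon>0$. If $|g(\hat x_i)|<\epsilon$ for all $i=1,\dots,P$, then for all $x\in[0,1/(1+c)]$, $$|g(x)|\le D\,(\log(P+1)+1)\left(\epsilon+\frac{\zeta^{-P}}{\zeta-1}\right),$$ where $\zeta=c+1+\sqrt{c^2+2c}$ and $D$ is a constant depending only on $a$, $c$ and $C$. *)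

From Stdlib Require Import Reals Lra Lia.
From Coquelicot Require Import Coquelicot.
Open Scope R_scope.

Definition cheb_node (c : R) (P i : nat) : R :=
  (1 + cos ((2 * INR i - 1) * PI / (2 * INR P))) / (2 * (1 + c)).

Definition zeta (c : R) : R := c + 1 + sqrt (c ^ 2 + 2 * c).

From Stdlib Require Import Reals Lra Lia List.
From Coquelicot Require Import Coquelicot.
Open Scope R_scope.

(* Substituting x = (1 + cos t) / (2 (1 + c)) maps the Chebyshev nodes to the angles
   (2i+1)π/(2P) and turns Chebyshev interpolation into interpolation by cosine
   polynomials of degree < P, which reproduces cos (k t) for k < P by discrete
   orthogonality.  The monomial x^n equals (1+c)^(-n) ((1 + cos t)/2)^n, a cosine
   polynomial whose coefficients a_l satisfy Σ |a_l| cosh (l ln ζ) = ((2+c)/2)^n.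
   Only the frequencies l >= P are misinterpolated, and 1 <= 2 ζ^(-P) cosh (l ln ζ)
   for them, so the interpolation error of x^n is at most
   (1 + Λ) 2 ζ^(-P) ((2+c)/(2+2c))^n, where Λ <= 16 ln (P+1) is the Lebesgue function.
   Summing against |g_n| <= C n^a bounds the interpolation error of g by a multiple of
   (1 + Λ) ζ^(-P), and the interpolant itself is at most ε Λ because |g| < ε at the
   nodes. *)

Fixpoint sumR (n : nat) (f : nat -> R) : R :=
  match n with O => 0 | S k => sumR k f + f k end.

Lemma sumR_ext n f g : (forall i, (i < n)%nat -> f i = g i) -> sumR n f = sumR n g.
Proof.
  induction n as [|n IH]; intros H; simpl; [reflexivity|].
  rewrite IH by (intros; apply H; lia). rewrite H by lia. reflexivity.
Qed.

Lemma sumR_plus n f g : sumR n (fun i => f i + g i) = sumR n f + sumR n g.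
Proof. induction n as [|n IH]; simpl; [ring|]. rewrite IH; ring. Qed.

Lemma sumR_scal_l n a f : sumR n (fun i => a * f i) = a * sumR n f.
Proof. induction n as [|n IH]; simpl; [ring|]. rewrite IH; ring. Qed.

Lemma sumR_scal_r n a f : sumR n (fun i => f i * a) = sumR n f * a.
Proof. induction n as [|n IH]; simpl; [ring|]. rewrite IH; ring. Qed.

Lemma sumR_const n a : sumR n (fun _ => a) = INR n * a.
Proof. induction n as [|n IH]; [simpl; ring|]. simpl sumR. rewrite IH, S_INR; ring. Qed.

Lemma sumR_le n f g : (forall i, (i < n)%nat -> f i <= g i) -> sumR n f <= sumR n g.
Proof.
  induction n as [|n IH]; intros H; simpl; [lra|].
  pose proof (H n ltac:(lia)). pose proof (IH (fun i Hi => H i ltac:(lia))). lra.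
Qed.

Lemma sumR_abs_le n f : Rabs (sumR n f) <= sumR n (fun i => Rabs (f i)).
Proof.
  induction n as [|n IH]; simpl; [rewrite Rabs_R0; lra|].
  pose proof (Rabs_triang (sumR n f) (f n)). lra.
Qed.

Lemma sumR_swap n m f :
  sumR n (fun i => sumR m (fun k => f i k)) = sumR m (fun k => sumR n (fun i => f i k)).
Proof.
  induction n as [|n IH]; simpl.
  - rewrite sumR_const; ring.
  - rewrite IH, <- sumR_plus. reflexivity.
Qed.

Lemma sumR_telescope n h : sumR n (fun i => h (S i) - h i) = h n - h O.
Proof. induction n as [|n IH]; simpl; [ring|]. rewrite IH; ring. Qed.

Lemma sumR_single n i0 f : (i0 < n)%nat ->
  (forall i, (i < n)%nat -> i <> i0 -> f i = 0) -> sumR n f = f i0.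
Proof.
  intros Hi0 H. induction n as [|n IH]; [lia|]. simpl.
  destruct (Nat.eq_dec i0 n) as [->|Hne].
  - rewrite (sumR_ext n f (fun _ => 0)) by (intros; apply H; lia).
    rewrite sumR_const; ring.
  - rewrite IH, (H n) by (lia || (intros; apply H; lia)). ring.
Qed.

Definition cheb_angle (P i : nat) : R := (2 * INR i + 1) * PI / (2 * INR P).

Definition cheb_map (c t : R) : R := (1 + cos t) / (2 * (1 + c)).

Lemma cheb_node_angle c P i : cheb_node c P (S i) = cheb_map c (cheb_angle P i).
Proof.
  unfold cheb_node, cheb_map, cheb_angle. rewrite S_INR.
  replace (2 * (INR i + 1) - 1) with (2 * INR i + 1) by ring. reflexivity.
Qed.

Lemma cheb_angle_range P i : (i < P)%nat -> 0 <= cheb_angle P i <= PI.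
Proof.
  intros Hi. pose proof PI_RGT_0. pose proof (pos_INR i).
  assert (INR i + 1 <= INR P) by (rewrite <- S_INR; apply le_INR; lia).
  unfold cheb_angle. split.
  - apply Rmult_le_pos; [nra|]. apply Rlt_le, Rinv_0_lt_compat; lra.
  - apply Rmult_le_reg_r with (2 * INR P); [lra|].
    unfold Rdiv. rewrite Rmult_assoc, Rinv_l by lra. nra.
Qed.

Lemma cheb_map_range c t : c > 0 -> 0 <= cheb_map c t < 1.
Proof.
  intros Hc. pose proof (COS_bound t). unfold cheb_map.
  split; [apply Rdiv_le_0_compat; lra|]. apply Rlt_div_l; lra.
Qed.

Lemma cheb_map_onto c x : c > 0 -> 0 <= x <= 1 / (1 + c) ->
  exists t, 0 <= t <= PI /\ cheb_map c t = x.
Proof.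
  intros Hc [Hx0 Hx1].
  assert (x * (1 + c) <= 1).
  { apply Rle_div_r in Hx1; lra. }
  exists (acos (2 * (1 + c) * x - 1)). split; [apply acos_bound|].
  unfold cheb_map. rewrite cos_acos by nra. field. lra.
Qed.

Definition cheb_cos_sum (P : nat) (y : R) : R := sumR P (fun i => cos (y * cheb_angle P i)).

Lemma cheb_cos_sum_0 P : cheb_cos_sum P 0 = INR P.
Proof.
  unfold cheb_cos_sum. rewrite (sumR_ext _ _ (fun _ => 1)), sumR_const; [ring|].
  intros. rewrite Rmult_0_l. apply cos_0.
Qed.

Lemma cheb_cos_sum_opp P y : cheb_cos_sum P (- y) = cheb_cos_sum P y.
Proof.
  apply sumR_ext. intros. rewrite Ropp_mult_distr_l_reverse. apply cos_neg.
Qed.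

Lemma cheb_cos_sum_nat P l : (0 < l < 2 * P)%nat -> cheb_cos_sum P (INR l) = 0.
Proof.
  intros Hl. assert (HP : 0 < INR P) by (apply lt_0_INR; lia).
  assert (Hl0 : 0 < INR l) by (apply lt_0_INR; lia).
  assert (HlP : INR l < 2 * INR P).
  { assert (H2P : INR l < INR (2 * P)) by (apply lt_INR; lia).
    rewrite mult_INR in H2P. simpl in H2P. lra. }
  pose proof PI_RGT_0.
  set (a := INR l * PI / (2 * INR P)).
  assert (Ha : 0 < a < PI).
  { unfold a. split; [apply Rdiv_lt_0_compat; nra|]. apply Rlt_div_l; nra. }
  (* Multiplying by [2 sin a] turns the sum into a telescoping one. *)
  apply (Rmult_eq_reg_l (2 * sin a)); [|pose proof (sin_gt_0 a (proj1 Ha) (proj2 Ha)); lra].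
  unfold cheb_cos_sum. rewrite Rmult_0_r, <- sumR_scal_l.
  rewrite (sumR_ext _ _ (fun i => sin (2 * INR (S i) * a) - sin (2 * INR i * a))).
  - rewrite (sumR_telescope P (fun i => sin (2 * INR i * a))). simpl INR.
    rewrite Rmult_0_r, Rmult_0_l, sin_0.
    replace (2 * INR P * a) with (IZR (Z.of_nat l) * PI)
      by (unfold a; rewrite <- INR_IZR_INZ; field; lra).
    rewrite sin_eq_0_1 by (eexists; reflexivity). ring.
  - intros i _. rewrite S_INR.
    replace (INR l * cheb_angle P i) with ((2 * INR i + 1) * a) by (unfold cheb_angle, a; field; lra).
    replace (2 * (INR i + 1) * a) with ((2 * INR i + 1) * a + a) by ring.
    replace (2 * INR i * a) with ((2 * INR i + 1) * a - a) by ring.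
    rewrite sin_plus, sin_minus. ring.
Qed.

Definition cheb_weight (m : nat) : R := match m with O => 1 | S _ => 2 end.

Lemma cheb_orthogonality P k m : (k < P)%nat -> (m < P)%nat ->
  cheb_weight m * sumR P (fun i => cos (INR k * cheb_angle P i) * cos (INR m * cheb_angle P i))
  = if Nat.eqb k m then INR P else 0.
Proof.
  intros Hk Hm.
  rewrite (sumR_ext _ _ (fun i => / 2 * (cos ((INR k - INR m) * cheb_angle P i)
                                          + cos ((INR k + INR m) * cheb_angle P i)))).
  2:{ intros i _. rewrite Rmult_minus_distr_r, Rmult_plus_distr_r, cos_minus, cos_plus. field. }
  rewrite sumR_scal_l, sumR_plus.
  fold (cheb_cos_sum P (INR k - INR m)) (cheb_cos_sum P (INR k + INR m)).
  rewrite <- plus_INR.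
  destruct (Nat.eqb_spec k m) as [<-|Hne].
  - rewrite Rminus_diag, cheb_cos_sum_0.
    destruct k as [|k]; simpl cheb_weight.
    + rewrite Nat.add_0_r. change (INR 0) with 0. rewrite cheb_cos_sum_0. field.
    + rewrite cheb_cos_sum_nat by lia. field.
  - rewrite (cheb_cos_sum_nat P (k + m)) by lia.
    assert (cheb_cos_sum P (INR k - INR m) = 0) as ->.
    { destruct (Nat.le_gt_cases m k).
      - rewrite <- minus_INR by lia. apply cheb_cos_sum_nat. lia.
      - rewrite <- cheb_cos_sum_opp, Ropp_minus_distr, <- minus_INR by lia.
        apply cheb_cos_sum_nat. lia. }
    ring.
Qed.

(* [cheb_interp P f] is the cosine polynomial of degree < P that agrees with [f] at
   the angles [cheb_angle P i]: Chebyshev interpolation in the variable [cos t]. *)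
Definition cheb_kernel (P : nat) (t s : R) : R :=
  sumR P (fun m => cheb_weight m * cos (INR m * t) * cos (INR m * s)) / INR P.

Definition cheb_interp (P : nat) (f : R -> R) (t : R) : R :=
  sumR P (fun i => f (cheb_angle P i) * cheb_kernel P t (cheb_angle P i)).

Definition lebesgue_fun (P : nat) (t : R) : R :=
  sumR P (fun i => Rabs (cheb_kernel P t (cheb_angle P i))).

Lemma lebesgue_fun_nonneg P t : 0 <= lebesgue_fun P t.
Proof.
  rewrite <- (Rmult_0_r (INR P)), <- sumR_const. apply sumR_le. intros. apply Rabs_pos.
Qed.

Lemma cheb_interp_ext P f g t : (forall s, f s = g s) -> cheb_interp P f t = cheb_interp P g t.
Proof. intros H. apply sumR_ext. intros. rewrite H. reflexivity. Qed.

Lemma cheb_interp_plus P f g t :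
  cheb_interp P (fun s => f s + g s) t = cheb_interp P f t + cheb_interp P g t.
Proof. unfold cheb_interp. rewrite <- sumR_plus. apply sumR_ext. intros. ring. Qed.

Lemma cheb_interp_scal P a f t : cheb_interp P (fun s => a * f s) t = a * cheb_interp P f t.
Proof. unfold cheb_interp. rewrite <- sumR_scal_l. apply sumR_ext. intros. ring. Qed.

Lemma cheb_interp_0 P t : cheb_interp P (fun _ => 0) t = 0.
Proof.
  unfold cheb_interp. rewrite (sumR_ext _ _ (fun _ => 0)), sumR_const; [ring|]. intros; ring.
Qed.

Lemma cheb_interp_abs_le P f t M : (forall i, (i < P)%nat -> Rabs (f (cheb_angle P i)) <= M) ->
  Rabs (cheb_interp P f t) <= M * lebesgue_fun P t.
Proof.
  intros H. unfold cheb_interp, lebesgue_fun. eapply Rle_trans; [apply sumR_abs_le|].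
  rewrite <- sumR_scal_l. apply sumR_le. intros i Hi. rewrite Rabs_mult.
  apply Rmult_le_compat_r; [apply Rabs_pos | auto].
Qed.

Lemma cheb_interp_cos P k t : (k < P)%nat ->
  cheb_interp P (fun s => cos (INR k * s)) t = cos (INR k * t).
Proof.
  intros Hk. assert (HP : 0 < INR P) by (apply lt_0_INR; lia).
  unfold cheb_interp, cheb_kernel.
  rewrite (sumR_ext _ _ (fun i => sumR P (fun m => / INR P * cos (INR m * t) *
      (cheb_weight m * (cos (INR k * cheb_angle P i) * cos (INR m * cheb_angle P i)))))).
  2:{ intros i _. unfold Rdiv. rewrite Rmult_comm, <- !sumR_scal_r. apply sumR_ext. intros. ring. }
  rewrite sumR_swap.
  rewrite (sumR_single P k); [| exact Hk |].
  - rewrite !sumR_scal_l, cheb_orthogonality, Nat.eqb_refl by assumption. field. lra.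
  - intros m Hm Hmk. rewrite !sumR_scal_l, cheb_orthogonality by assumption.
    apply Nat.eqb_neq in Hmk. rewrite Nat.eqb_sym, Hmk. ring.
Qed.

Definition cospoly := list (nat * R).

Fixpoint cp_eval (p : cospoly) (t : R) : R :=
  match p with
  | nil => 0
  | (l, a) :: q => a * cos (INR l * t) + cp_eval q t
  end.

Fixpoint cp_weight (mu : R) (p : cospoly) : R :=
  match p with
  | nil => 0
  | (l, a) :: q => Rabs a * cosh (mu * INR l) + cp_weight mu q
  end.

(* [|l - 1|]; frequency 0 goes to 1 because [cos (- t) = cos t]. *)
Definition freq_down (l : nat) : nat := match l with O => 1%nat | S k => k end.

Fixpoint cp_mul_cos2half (p : cospoly) : cospoly :=
  match p with
  | nil => nil
  | (l, a) :: q => (l, a / 2) :: (S l, a / 4) :: (freq_down l, a / 4) :: cp_mul_cos2half q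
  end.

Definition cp_cos2half_pow (n : nat) : cospoly := Nat.iter n cp_mul_cos2half ((O, 1) :: nil).

Lemma cos_succ_add_down l t :
  cos (INR (S l) * t) + cos (INR (freq_down l) * t) = 2 * cos (INR l * t) * cos t.
Proof.
  destruct l as [|k]; simpl freq_down.
  - simpl INR. rewrite Rmult_0_l, Rmult_1_l, cos_0. ring.
  - rewrite !S_INR, Rmult_plus_distr_r, Rmult_1_l, cos_plus.
    replace (INR k * t) with ((INR k + 1) * t - t) by ring. rewrite cos_minus. ring.
Qed.

Lemma cosh_succ_add_down mu l :
  cosh (mu * INR (S l)) + cosh (mu * INR (freq_down l)) = 2 * cosh mu * cosh (mu * INR l).
Proof.
  unfold cosh. destruct l as [|k]; simpl freq_down.
  - simpl INR. rewrite Rmult_0_r, Rmult_1_r, Ropp_0, exp_0. field.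
  - rewrite !S_INR.
    replace (mu * (INR k + 1 + 1)) with (mu * (INR k + 1) + mu) by ring.
    replace (mu * INR k) with (mu * (INR k + 1) + - mu) by ring.
    rewrite !Ropp_plus_distr, !exp_plus, Ropp_involutive. field.
Qed.

Lemma cp_eval_mul_cos2half p t : cp_eval (cp_mul_cos2half p) t = cp_eval p t * ((1 + cos t) / 2).
Proof.
  induction p as [|[l a] q IH]; cbn [cp_eval cp_mul_cos2half]; [ring|]. rewrite IH.
  transitivity (a / 2 * cos (INR l * t) + a / 4 * (cos (INR (S l) * t) + cos (INR (freq_down l) * t))
                + cp_eval q t * ((1 + cos t) / 2)); [ring|].
  rewrite cos_succ_add_down. field.
Qed.

Lemma cp_weight_mul_cos2half mu p :
  cp_weight mu (cp_mul_cos2half p) = (1 + cosh mu) / 2 * cp_weight mu p.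
Proof.
  induction p as [|[l a] q IH]; cbn [cp_weight cp_mul_cos2half]; [ring|]. rewrite IH.
  unfold Rdiv. rewrite !Rabs_mult, (Rabs_pos_eq (/ 2)), (Rabs_pos_eq (/ 4)) by lra.
  transitivity (Rabs a * / 2 * cosh (mu * INR l)
    + Rabs a * / 4 * (cosh (mu * INR (S l)) + cosh (mu * INR (freq_down l)))
    + (1 + cosh mu) * / 2 * cp_weight mu q); [ring|].
  rewrite cosh_succ_add_down. field.
Qed.

Lemma cp_eval_cos2half_pow n t : cp_eval (cp_cos2half_pow n) t = ((1 + cos t) / 2) ^ n.
Proof.
  induction n as [|n IH]; simpl.
  - rewrite Rmult_0_l, cos_0. ring.
  - rewrite cp_eval_mul_cos2half. fold (cp_cos2half_pow n). rewrite IH. ring.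
Qed.

Lemma cp_weight_cos2half_pow mu n : cp_weight mu (cp_cos2half_pow n) = ((1 + cosh mu) / 2) ^ n.
Proof.
  induction n as [|n IH]; simpl.
  - rewrite Rmult_0_r, cosh_0, Rabs_R1. ring.
  - rewrite cp_weight_mul_cos2half. fold (cp_cos2half_pow n). rewrite IH. ring.
Qed.

Definition cp_low (P : nat) (p : cospoly) : cospoly :=
  filter (fun la => Nat.ltb (fst la) P) p.
Definition cp_high (P : nat) (p : cospoly) : cospoly :=
  filter (fun la => negb (Nat.ltb (fst la) P)) p.

Lemma cp_eval_split P p t : cp_eval p t = cp_eval (cp_low P p) t + cp_eval (cp_high P p) t.
Proof.
  induction p as [|[l a] q IH]; simpl; [ring|]. unfold cp_low, cp_high in *. simpl.
  destruct (Nat.ltb l P); simpl; rewrite IH; ring.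
Qed.

Lemma cheb_interp_cp_low P p t : cheb_interp P (cp_eval (cp_low P p)) t = cp_eval (cp_low P p) t.
Proof.
  induction p as [|[l a] q IH]; unfold cp_low in *; simpl; [apply cheb_interp_0|].
  destruct (Nat.ltb_spec l P); simpl; fold (cp_low P q) in *; [|exact IH].
  rewrite cheb_interp_plus, cheb_interp_scal, cheb_interp_cos, IH by assumption. reflexivity.
Qed.

Lemma cosh_nonneg x : 0 <= cosh x.
Proof. unfold cosh. pose proof (exp_pos x). pose proof (exp_pos (- x)). lra. Qed.

Lemma two_exp_neg_mul_cosh_ge_1 mu P l : 0 <= mu -> (P <= l)%nat ->
  1 <= 2 * exp (- (mu * INR P)) * cosh (mu * INR l).
Proof.
  intros Hmu Hl. apply le_INR in Hl.
  assert (exp (mu * INR l) <= 2 * cosh (mu * INR l))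
    by (unfold cosh; pose proof (exp_pos (- (mu * INR l))); lra).
  assert (1 <= exp (- (mu * INR P)) * exp (mu * INR l)).
  { rewrite <- exp_plus. pose proof (exp_ineq1_le (- (mu * INR P) + mu * INR l)). nra. }
  pose proof (exp_pos (- (mu * INR P))). nra.
Qed.

Lemma cp_high_abs_le mu P p t : 0 <= mu ->
  Rabs (cp_eval (cp_high P p) t) <= 2 * exp (- (mu * INR P)) * cp_weight mu p.
Proof.
  intros Hmu. pose proof (exp_pos (- (mu * INR P))).
  induction p as [|[l a] q IH]; unfold cp_high in *; simpl.
  - rewrite Rabs_R0. lra.
  - pose proof (Rabs_pos a). pose proof (cosh_nonneg (mu * INR l)).
    destruct (Nat.ltb_spec l P); simpl.
    + assert (0 <= 2 * exp (- (mu * INR P)) * (Rabs a * cosh (mu * INR l))) by (apply Rmult_le_pos; nra).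
      lra.
    + pose proof (two_exp_neg_mul_cosh_ge_1 mu P l Hmu ltac:(lia)).
      eapply Rle_trans; [apply Rabs_triang|]. rewrite Rabs_mult.
      assert (Rabs (cos (INR l * t)) <= 1) by (apply Rabs_le, COS_bound).
      pose proof (Rabs_pos (cos (INR l * t))). nra.
Qed.

(* Frequencies below [P] are reproduced exactly, so only the high part contributes. *)
Lemma cheb_interp_error_cp mu P p t : 0 <= mu ->
  Rabs (cp_eval p t - cheb_interp P (cp_eval p) t)
  <= (1 + lebesgue_fun P t) * (2 * exp (- (mu * INR P)) * cp_weight mu p).
Proof.
  intros Hmu.
  rewrite (cheb_interp_ext P _ (fun s => cp_eval (cp_low P p) s + cp_eval (cp_high P p) s))
    by (intros; apply cp_eval_split).
  rewrite cheb_interp_plus, cheb_interp_cp_low, (cp_eval_split P p t).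
  replace (_ + _ - _) with (cp_eval (cp_high P p) t - cheb_interp P (cp_eval (cp_high P p)) t) by ring.
  eapply Rle_trans; [apply Rabs_triang|]. rewrite Rabs_Ropp.
  pose proof (cp_high_abs_le mu P p t Hmu).
  pose proof (cheb_interp_abs_le P (cp_eval (cp_high P p)) t _ (fun i _ => cp_high_abs_le mu P p _ Hmu)).
  lra.
Qed.

Definition dirichlet (P : nat) (p : R) : R := sumR P (fun m => cheb_weight m * cos (INR m * p)).

Lemma cheb_kernel_dirichlet P t s : (1 <= P)%nat ->
  cheb_kernel P t s = (dirichlet P (t - s) + dirichlet P (t + s)) / (2 * INR P).
Proof.
  intros HP. assert (0 < INR P) by (apply lt_0_INR; lia).
  unfold cheb_kernel, dirichlet. rewrite <- sumR_plus.
  rewrite (sumR_ext _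
    (fun m => cheb_weight m * cos (INR m * (t - s)) + cheb_weight m * cos (INR m * (t + s)))
    (fun m => 2 * (cheb_weight m * cos (INR m * t) * cos (INR m * s)))), sumR_scal_l.
  - field. lra.
  - intros m _. rewrite Rmult_minus_distr_l, Rmult_plus_distr_l, cos_minus, cos_plus. ring.
Qed.

Lemma dirichlet_mul_sin P p : (1 <= P)%nat -> dirichlet P p * sin (p / 2) = sin ((INR P - 1 / 2) * p).
Proof.
  intros HP. induction P as [|P IH]; [lia|]. unfold dirichlet in *. simpl sumR.
  destruct P as [|P].
  - simpl. rewrite Rmult_0_l, cos_0. replace ((1 - 1 / 2) * p) with (p / 2) by field. ring.
  - rewrite Rmult_plus_distr_r, IH by lia. simpl cheb_weight. rewrite (S_INR (S P)).
    set (A := INR (S P) * p).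
    replace ((INR (S P) + 1 - 1 / 2) * p) with (A + p / 2) by (unfold A; field).
    replace ((INR (S P) - 1 / 2) * p) with (A - p / 2) by (unfold A; field).
    rewrite sin_plus, sin_minus. ring.
Qed.

Lemma dirichlet_abs_le P p : Rabs (dirichlet P p) <= 2 * INR P.
Proof.
  eapply Rle_trans; [apply sumR_abs_le|]. rewrite Rmult_comm, <- sumR_const.
  apply sumR_le. intros m _. rewrite Rabs_mult.
  assert (Rabs (cos (INR m * p)) <= 1) by apply Rabs_le, COS_bound.
  pose proof (Rabs_pos (cos (INR m * p))).
  destruct m; simpl cheb_weight; rewrite Rabs_pos_eq; lra.
Qed.

Lemma sin_ge_third y : 0 <= y <= PI / 2 -> y / 3 <= sin y.
Proof.
  intros [H0 H1]. pose proof PI_4.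
  destruct (sin_bound y 0 H0 ltac:(lra)) as [Hs _].
  unfold sin_approx, sin_term in Hs. simpl in Hs.
  assert (y * y <= 4) by nra. nra.
Qed.

Lemma abs_sin_half_diff_ge t s : 0 <= t <= PI -> 0 <= s <= PI ->
  Rabs (t - s) / 6 <= Rabs (sin ((t - s) / 2)).
Proof.
  intros Ht Hs. destruct (Rle_dec 0 (t - s)).
  - pose proof (sin_ge_third ((t - s) / 2) ltac:(lra)).
    rewrite !Rabs_pos_eq by lra. lra.
  - replace ((t - s) / 2) with (- ((s - t) / 2)) by field.
    pose proof (sin_ge_third ((s - t) / 2) ltac:(lra)).
    rewrite sin_neg, Rabs_Ropp, Rabs_left, Rabs_pos_eq by lra. lra.
Qed.

Lemma abs_sin_half_sum_ge t s : 0 <= t <= PI -> 0 <= s <= PI ->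
  Rabs (t - s) / 6 <= Rabs (sin ((t + s) / 2)).
Proof.
  intros Ht Hs. assert (Rabs (t - s) <= Rmin (t + s) (2 * PI - t - s)).
  { apply Rmin_glb; apply Rabs_le; lra. }
  pose proof (Rmin_l (t + s) (2 * PI - t - s)). pose proof (Rmin_r (t + s) (2 * PI - t - s)).
  destruct (Rle_dec ((t + s) / 2) (PI / 2)).
  - pose proof (sin_ge_third ((t + s) / 2) ltac:(lra)). rewrite (Rabs_pos_eq (sin _)); lra.
  - replace ((t + s) / 2) with (PI - (2 * PI - t - s) / 2) by field. rewrite sin_PI_x.
    pose proof (sin_ge_third ((2 * PI - t - s) / 2) ltac:(lra)). rewrite (Rabs_pos_eq (sin _)); lra.
Qed.

Lemma cheb_kernel_abs_le P t s : (1 <= P)%nat -> 0 <= t <= PI -> 0 <= s <= PI ->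
  Rabs (cheb_kernel P t s) <= 4 / (1 + Rabs (t - s) * INR P / PI).
Proof.
  intros HP Ht Hs. assert (HP1 : 1 <= INR P) by (apply (le_INR 1); lia).
  pose proof PI2_3_2. set (d := Rabs (t - s)). assert (Hd : 0 <= d) by apply Rabs_pos.
  set (u := d * INR P / PI). assert (Hu : 0 <= u) by (unfold u; apply Rdiv_le_0_compat; nra).
  rewrite cheb_kernel_dirichlet by exact HP. unfold Rdiv at 1.
  rewrite Rabs_mult, (Rabs_pos_eq (/ _)) by (apply Rlt_le, Rinv_0_lt_compat; lra).
  pose proof (Rabs_triang (dirichlet P (t - s)) (dirichlet P (t + s))) as Htri.
  apply Rmult_le_reg_l with (2 * INR P * (1 + u)); [nra|].
  replace (2 * INR P * (1 + u) * (4 / (1 + u))) with (8 * INR P) by (field; lra).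
  replace (2 * INR P * (1 + u) * (Rabs (dirichlet P (t - s) + dirichlet P (t + s)) * / (2 * INR P)))
    with ((1 + u) * Rabs (dirichlet P (t - s) + dirichlet P (t + s))) by (field; lra).
  destruct (Rle_dec u 1).
  - pose proof (dirichlet_abs_le P (t - s)). pose proof (dirichlet_abs_le P (t + s)).
    pose proof (Rabs_pos (dirichlet P (t - s) + dirichlet P (t + s))). nra.
  - (* far from the node: [|D(t +- s)| <= 1 / |sin ((t +- s)/2)| <= 6 / d] *)
    assert (Hd0 : 0 < d) by (destruct Hd as [|Hd]; [lra|]; unfold u in n; rewrite <- Hd in n; lra).
    assert (Hdir : forall q, Rabs (t - s) / 6 <= Rabs (sin (q / 2)) -> d * Rabs (dirichlet P q) <= 6).
    { intros q Hq. pose proof (dirichlet_mul_sin P q HP) as E.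
      apply (f_equal Rabs) in E. rewrite Rabs_mult in E.
      assert (Rabs (sin ((INR P - 1 / 2) * q)) <= 1) by apply Rabs_le, SIN_bound.
      pose proof (Rabs_pos (dirichlet P q)). fold d in Hq. nra. }
    pose proof (Hdir _ (abs_sin_half_diff_ge t s Ht Hs)).
    pose proof (Hdir _ (abs_sin_half_sum_ge t s Ht Hs)).
    set (S := Rabs (dirichlet P (t - s) + dirichlet P (t + s))) in Htri |- *.
    assert (HS : 0 <= S) by apply Rabs_pos.
    assert (d * S <= 12) by (pose proof (Rmult_le_compat_l d _ _ (Rlt_le _ _ Hd0) Htri); lra).
    assert (u * PI * S <= 12 * INR P).
    { replace (u * PI) with (d * INR P) by (unfold u; field; lra). nra. }
    assert (3 * (u * S) <= PI * (u * S)) by (apply Rmult_le_compat_r; nra).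
    nra.
Qed.

(* An antiderivative of [1 / (1 + |y|)]. *)
Definition signed_log1p (y : R) : R := if Rle_dec 0 y then ln (1 + y) else - ln (1 - y).

Lemma ln_sub_ge A B : 0 < A -> 0 < B -> 1 - B / A <= ln A - ln B.
Proof.
  intros HA HB. pose proof (exp_ineq1_le (ln (B / A))).
  rewrite exp_ln, ln_div in H by (try apply Rdiv_lt_0_compat; assumption). lra.
Qed.

Lemma inv_le_twice_inv a b : 0 < a -> 0 < b -> b <= 2 * a -> 1 / a <= 2 * (1 / b).
Proof.
  intros Ha Hb Hab. apply Rmult_le_reg_l with (a * b); [nra|].
  replace (a * b * (1 / a)) with b by (field; lra).
  replace (a * b * (2 * (1 / b))) with (2 * a) by (field; lra). exact Hab.
Qed.

Lemma inv_1_abs_le_signed_log1p_step y :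
  1 / (1 + Rabs y) <= 2 * (signed_log1p (y + 1 / 2) - signed_log1p (y - 1 / 2)).
Proof.
  unfold signed_log1p. destruct (Rle_dec 0 (y + 1 / 2)), (Rle_dec 0 (y - 1 / 2)); [| |lra|].
  - rewrite Rabs_pos_eq by lra.
    pose proof (ln_sub_ge (1 + (y + 1 / 2)) (1 + (y - 1 / 2)) ltac:(lra) ltac:(lra)).
    replace (1 - (1 + (y - 1 / 2)) / (1 + (y + 1 / 2))) with (1 / (y + 3 / 2)) in H by (field; lra).
    pose proof (inv_le_twice_inv (1 + y) (y + 3 / 2) ltac:(lra) ltac:(lra) ltac:(lra)). lra.
  - assert (Hln2 : 1 / 2 <= ln 2).
    { pose proof (ln_sub_ge 2 1 ltac:(lra) ltac:(lra)). rewrite ln_1 in H. lra. }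
    assert (ln 2 <= ln (1 + (y + 1 / 2)) + ln (1 - (y - 1 / 2))).
    { rewrite <- ln_mult by lra. apply ln_le; nra. }
    assert (1 / (1 + Rabs y) <= 1).
    { pose proof (Rabs_pos y). apply Rmult_le_reg_l with (1 + Rabs y); [lra|].
      replace ((1 + Rabs y) * (1 / (1 + Rabs y))) with 1 by (field; lra). lra. }
    lra.
  - rewrite Rabs_left by lra.
    pose proof (ln_sub_ge (1 - (y - 1 / 2)) (1 - (y + 1 / 2)) ltac:(lra) ltac:(lra)).
    replace (1 - (1 - (y + 1 / 2)) / (1 - (y - 1 / 2))) with (1 / (3 / 2 - y)) in H by (field; lra).
    pose proof (inv_le_twice_inv (1 + - y) (3 / 2 - y) ltac:(lra) ltac:(lra) ltac:(lra)). lra.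
Qed.

Lemma sum_inv_dist_le_ln P tau : 0 <= tau <= INR P ->
  sumR P (fun i => 1 / (1 + Rabs (tau - (INR i + 1 / 2)))) <= 4 * ln (INR P + 1).
Proof.
  intros Htau. set (F := fun j => - signed_log1p (tau - INR j)).
  apply Rle_trans with (sumR P (fun i => 2 * (F (S i) - F i))).
  - apply sumR_le. intros i _. unfold F. rewrite S_INR.
    pose proof (inv_1_abs_le_signed_log1p_step (tau - (INR i + 1 / 2))) as H.
    replace (tau - (INR i + 1 / 2) + 1 / 2) with (tau - INR i) in H by field.
    replace (tau - (INR i + 1 / 2) - 1 / 2) with (tau - (INR i + 1)) in H by field. lra.
  - rewrite sumR_scal_l, (sumR_telescope P F). unfold F, signed_log1p. simpl INR.
    rewrite Rminus_0_r. pose proof (pos_INR P).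
    assert (0 <= ln (INR P + 1)) by (rewrite <- ln_1; apply ln_le; lra).
    destruct (Rle_dec 0 (tau - INR P)), (Rle_dec 0 tau); try lra.
    + replace (tau - INR P) with 0 by lra. rewrite Rplus_0_r, ln_1.
      assert (ln (1 + tau) <= ln (INR P + 1)) by (apply ln_le; lra). lra.
    + assert (ln (1 + tau) <= ln (INR P + 1)) by (apply ln_le; lra).
      assert (ln (1 - (tau - INR P)) <= ln (INR P + 1)) by (apply ln_le; lra). lra.
Qed.

Lemma lebesgue_fun_le P t : (1 <= P)%nat -> 0 <= t <= PI ->
  lebesgue_fun P t <= 16 * ln (INR P + 1).
Proof.
  intros HP Ht. assert (HP1 : 1 <= INR P) by (apply (le_INR 1); lia). pose proof PI_RGT_0.
  set (tau := t * INR P / PI).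
  apply Rle_trans with (sumR P (fun i => 4 * (1 / (1 + Rabs (tau - (INR i + 1 / 2)))))).
  - apply sumR_le. intros i Hi.
    eapply Rle_trans; [apply cheb_kernel_abs_le; auto using cheb_angle_range|].
    replace (Rabs (t - cheb_angle P i) * INR P / PI) with (Rabs (tau - (INR i + 1 / 2))); [lra|].
    replace (tau - (INR i + 1 / 2)) with ((t - cheb_angle P i) * (INR P / PI))
      by (unfold tau, cheb_angle; field; lra).
    rewrite Rabs_mult, (Rabs_pos_eq (INR P / PI)) by (apply Rdiv_le_0_compat; lra). field. lra.
  - rewrite sumR_scal_l.
    assert (0 <= tau <= INR P).
    { unfold tau. split; [apply Rdiv_le_0_compat; nra|]. apply Rle_div_l; nra. }
    pose proof (sum_inv_dist_le_ln P tau H0). lra.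
Qed.

Definition cheb_rate (c : R) : R := (2 + c) / (2 * (1 + c)).

Lemma zeta_gt_1 c : c > 0 -> 1 < zeta c.
Proof. intros Hc. unfold zeta. pose proof (sqrt_pos (c ^ 2 + 2 * c)). lra. Qed.

Lemma cosh_ln_zeta c : c > 0 -> cosh (ln (zeta c)) = 1 + c.
Proof.
  intros Hc. pose proof (zeta_gt_1 c Hc).
  assert (Hs : sqrt (c ^ 2 + 2 * c) * sqrt (c ^ 2 + 2 * c) = c ^ 2 + 2 * c) by (apply sqrt_sqrt; nra).
  unfold cosh. rewrite exp_Ropp, exp_ln by lra.
  apply (Rmult_eq_reg_l (2 * zeta c)); [|lra]. field_simplify; [|lra].
  unfold zeta. nra.
Qed.

Lemma cheb_interp_error_pow c P n t : c > 0 ->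
  Rabs (cheb_map c t ^ n - cheb_interp P (fun s => cheb_map c s ^ n) t)
  <= (1 + lebesgue_fun P t) * (2 / zeta c ^ P * cheb_rate c ^ n).
Proof.
  intros Hc. pose proof (zeta_gt_1 c Hc) as Hz.
  set (r := / (1 + c)). assert (Hr : 0 < r) by (apply Rinv_0_lt_compat; lra).
  assert (Hpow : forall s, cheb_map c s ^ n = r ^ n * cp_eval (cp_cos2half_pow n) s).
  { intros s. rewrite cp_eval_cos2half_pow, <- Rpow_mult_distr.
    unfold cheb_map, r. f_equal. field. lra. }
  assert (Hexp : exp (- (ln (zeta c) * INR P)) = / zeta c ^ P).
  { rewrite exp_Ropp, Rmult_comm, <- Rpower_pow by lra. reflexivity. }
  pose proof (cheb_interp_error_cp (ln (zeta c)) P (cp_cos2half_pow n) t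
    ltac:(rewrite <- ln_1; apply ln_le; lra)) as H.
  rewrite cp_weight_cos2half_pow, cosh_ln_zeta, Hexp in H by exact Hc.
  rewrite (cheb_interp_ext _ _ _ _ Hpow), cheb_interp_scal, Hpow, <- Rmult_minus_distr_l.
  rewrite Rabs_mult, Rabs_pos_eq by (apply pow_le; lra).
  replace (cheb_rate c) with (r * ((1 + (1 + c)) / 2)) by (unfold cheb_rate, r; field; lra).
  rewrite Rpow_mult_distr.
  apply Rle_trans with (r ^ n * ((1 + lebesgue_fun P t) *
    (2 * / zeta c ^ P * ((1 + (1 + c)) / 2) ^ n))).
  - apply Rmult_le_compat_l; [apply pow_le; lra | exact H].
  - right. unfold Rdiv. ring.
Qed.

Lemma is_series_0 : is_series (fun _ : nat => 0) 0.
Proof.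
  assert (Hhalf : Rabs (1 / 2) < 1) by (rewrite Rabs_pos_eq; lra).
  pose proof (is_series_scal_r 0 _ _ (is_series_geom (1 / 2) Hhalf)) as H.
  rewrite Rmult_0_r in H. eapply is_series_ext; [|exact H]. intros; simpl; ring.
Qed.

Lemma is_series_sumR P (a : nat -> nat -> R) (A k : nat -> R) :
  (forall i, (i < P)%nat -> is_series (fun n => a n i) (A i)) ->
  is_series (fun n => sumR P (fun i => a n i * k i)) (sumR P (fun i => A i * k i)).
Proof.
  induction P as [|P IH]; intros H; simpl; [exact is_series_0|].
  apply (is_series_plus _ _ _ _ (IH (fun i Hi => H i ltac:(lia)))).
  apply is_series_scal_r, H. lia.
Qed.

Lemma is_series_abs_le (a b : nat -> R) (V B : R) : is_series a V -> is_series b B ->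
  (forall n, Rabs (a n) <= b n) -> Rabs V <= B.
Proof.
  intros Ha Hb Hab.
  assert (Ea : ex_series (fun n => Rabs (a n))).
  { apply (@ex_series_le R_AbsRing R_CompleteNormedModule _ b); [|exists B; exact Hb].
    intros n. change (norm (Rabs (a n))) with (Rabs (Rabs (a n))). rewrite Rabs_Rabsolu. apply Hab. }
  rewrite <- (is_series_unique a V Ha), <- (is_series_unique b B Hb).
  eapply Rle_trans; [apply Series_Rabs, Ea|].
  apply Series_le; [|exists B; exact Hb]. intros n. split; [apply Rabs_pos | apply Hab].
Qed.

Lemma cheb_interp_error_series c P (gn : nat -> R) (g : R -> R) t B v :
  c > 0 -> 0 <= v < 1 ->
  (forall n, Rabs (gn n) * cheb_rate c ^ n <= B * v ^ n) ->
  (forall x, 0 <= x < 1 -> is_series (fun n => gn n * x ^ n) (g x)) ->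
  Rabs (g (cheb_map c t) - cheb_interp P (fun s => g (cheb_map c s)) t)
  <= (1 + lebesgue_fun P t) * (2 / zeta c ^ P) * (B / (1 - v)).
Proof.
  intros Hc Hv Hgn Hg. pose proof (zeta_gt_1 c Hc).
  set (E := (1 + lebesgue_fun P t) * (2 / zeta c ^ P)).
  assert (HE : 0 <= E).
  { pose proof (lebesgue_fun_nonneg P t). apply Rmult_le_pos; [lra|].
    apply Rdiv_le_0_compat; [lra | apply pow_lt; lra]. }
  apply (is_series_abs_le (fun n => gn n * (cheb_map c t ^ n
            - cheb_interp P (fun s => cheb_map c s ^ n) t)) (fun n => E * (B * v ^ n))).
  - eapply is_series_ext; [|apply (is_series_minus _ _ _ _
      (Hg _ (cheb_map_range c t Hc))
      (is_series_sumR P (fun n i => gn n * cheb_map c (cheb_angle P i) ^ n) _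
         (fun i => cheb_kernel P t (cheb_angle P i)) (fun i _ => Hg _ (cheb_map_range c _ Hc))))].
    intros n. unfold minus, plus, opp; simpl. unfold cheb_interp.
    rewrite Rmult_minus_distr_l, <- sumR_scal_l. unfold Rminus. do 2 f_equal.
    apply sumR_ext. intros. ring.
  - replace (E * (B / (1 - v))) with (/ (1 - v) * (E * B)) by (field; lra).
    eapply is_series_ext; [|apply is_series_scal_r, is_series_geom; rewrite Rabs_pos_eq; lra].
    intros n. simpl. ring.
  - intros n. rewrite Rabs_mult.
    pose proof (cheb_interp_error_pow c P n t Hc). pose proof (Rabs_pos (gn n)).
    apply Rle_trans with (Rabs (gn n) * cheb_rate c ^ n * E).
    + unfold E.
      replace (Rabs (gn n) * cheb_rate c ^ n * ((1 + lebesgue_fun P t) * (2 / zeta c ^ P)))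
        with (Rabs (gn n) * ((1 + lebesgue_fun P t) * (2 / zeta c ^ P * cheb_rate c ^ n))) by ring.
      apply Rmult_le_compat_l; assumption.
    + rewrite Rmult_comm. apply Rmult_le_compat_l; [exact HE | apply Hgn].
Qed.

Lemma Rpower_mul_geom_le a w v : 0 < w < v -> exists K, 0 < K /\
  forall n : nat, (1 <= n)%nat -> Rpower (INR n) a * w ^ n <= K * v ^ n.
Proof.
  intros Hw. set (q := v / w). assert (Hq : 1 < q) by (apply Rlt_div_r; lra).
  set (d := ln q). assert (Hd : 0 < d) by (rewrite <- ln_1; apply ln_increasing; lra).
  set (b := Rmax a 1). assert (Hb : 1 <= b) by apply Rmax_r. assert (Hab : a <= b) by apply Rmax_l.
  set (K0 := - b - b * ln (d / b)).
  exists (exp K0). split; [apply exp_pos|]. intros n Hn.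
  assert (Hn1 : 1 <= INR n) by (apply (le_INR 1); lia).
  assert (Hln : 0 <= ln (INR n)) by (rewrite <- ln_1; apply ln_le; lra).
  (* [ln y <= y - 1] at [y = n d / b] *)
  assert (Hlin : a * ln (INR n) <= INR n * d + K0).
  { pose proof (exp_ineq1_le (ln (INR n * (d / b)))) as H.
    rewrite exp_ln in H by (apply Rmult_lt_0_compat; [lra | apply Rdiv_lt_0_compat; lra]).
    rewrite ln_mult in H by (try apply Rdiv_lt_0_compat; lra).
    assert (b * (ln (INR n) + ln (d / b)) <= b * (INR n * (d / b) - 1)) by (apply Rmult_le_compat_l; lra).
    replace (b * (INR n * (d / b) - 1)) with (INR n * d - b) in H0 by (field; lra).
    unfold K0. nra. }
  replace (v ^ n) with (q ^ n * w ^ n) by (rewrite <- Rpow_mult_distr; unfold q; f_equal; field; lra).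
  assert (Rpower (INR n) a <= exp K0 * q ^ n).
  { rewrite <- (Rpower_pow n q) by lra. unfold Rpower. rewrite <- exp_plus.
    fold d. destruct (Rle_lt_or_eq_dec (a * ln (INR n)) (K0 + INR n * d)) as [Hlt | ->]; [lra| |lra].
    apply Rlt_le, exp_increasing, Hlt. }
  pose proof (pow_le w n ltac:(lra)). nra.
Qed.

Lemma interp_split_bound (y J Lam L eps M q : R) :
  Rabs (y - J) <= (1 + Lam) * (M * q) -> Rabs J <= eps * Lam ->
  0 <= Lam <= 16 * L -> 0 <= L -> 0 < eps -> 0 <= M -> 0 <= q ->
  Rabs y <= 17 * (1 + M) * (L + 1) * (eps + q).
Proof.
  intros Herr HJ HLam HL Heps HM Hq.
  pose proof (Rabs_triang (y - J) J) as Htri.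
  replace (y - J + J) with y in Htri by ring.
  assert (eps * Lam <= 17 * (L + 1) * eps) by nra.
  assert ((1 + Lam) * (M * q) <= 17 * (L + 1) * (M * q))
    by (apply Rmult_le_compat_r; [apply Rmult_le_pos|]; lra).
  assert (0 <= (L + 1) * (q + M * eps)) by (apply Rmult_le_pos; nra).
  nra.
Qed.

Theorem mainTheorem6 :
  forall a c C : R, a > -1 -> C > 0 -> c > 0 ->
  exists D : R,
    forall (gn : nat -> R) (g : R -> R) (P : nat) (eps : R),
      gn 0%nat = 0 ->
      (forall n : nat, (1 <= n)%nat -> Rabs (gn n) <= C * Rpower (INR n) a) ->
      (forall x : R, 0 <= x < 1 -> is_series (fun n => gn n * x ^ n) (g x)) ->
      (1 <= P)%nat ->
      eps > 0 ->
      (forall i : nat, (1 <= i <= P)%nat -> Rabs (g (cheb_node c P i)) < eps) ->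
      forall x : R, 0 <= x <= 1 / (1 + c) ->
        Rabs (g x) <= D * (ln (INR P + 1) + 1)
                        * (eps + / (zeta c ^ P) / (zeta c - 1)).
Proof.
  intros a c C Ha HC Hc.
  pose proof (zeta_gt_1 c Hc) as Hz.
  set (w := cheb_rate c). set (v := (1 + w) / 2).
  assert (Hw : 0 < w < 1)
    by (unfold w, cheb_rate; split; [apply Rdiv_lt_0_compat | apply Rlt_div_l]; lra).
  assert (Hv : w < v < 1) by (unfold v; lra).
  destruct (Rpower_mul_geom_le a w v ltac:(lra)) as [K [HK HKn]].
  set (M := 2 * (C * K / (1 - v)) * (zeta c - 1)).
  exists (17 * (1 + M)).
  intros gn g P eps Hg0 Hgn Hg HP Heps Hnodes x Hx.
  destruct (cheb_map_onto c x Hc Hx) as [t [Ht <-]].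
  assert (Hcoef : forall n, Rabs (gn n) * w ^ n <= C * K * v ^ n).
  { intros [|n]; [rewrite Hg0, Rabs_R0; simpl; nra|].
    pose proof (pow_le w (S n) ltac:(lra)). pose proof (HKn (S n) ltac:(lia)).
    pose proof (Hgn (S n) ltac:(lia)). nra. }
  apply (interp_split_bound _ (cheb_interp P (fun s => g (cheb_map c s)) t) (lebesgue_fun P t)).
  - replace ((1 + lebesgue_fun P t) * (M * (/ zeta c ^ P / (zeta c - 1))))
      with ((1 + lebesgue_fun P t) * (2 / zeta c ^ P) * (C * K / (1 - v)))
      by (unfold M; field; repeat split; try apply pow_nonzero; lra).
    apply (cheb_interp_error_series c P gn g t (C * K) v Hc ltac:(lra) Hcoef Hg).
  - apply cheb_interp_abs_le. intros i Hi. rewrite <- cheb_node_angle. left. apply Hnodes. lia.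
  - split; [apply lebesgue_fun_nonneg | apply lebesgue_fun_le; assumption].
  - rewrite <- ln_1. apply ln_le; [lra|]. pose proof (pos_INR P). lra.
  - exact Heps.
  - unfold M. apply Rmult_le_pos; [apply Rmult_le_pos; [lra | apply Rdiv_le_0_compat; nra] | lra].
  - apply Rdiv_le_0_compat; [apply Rlt_le, Rinv_0_lt_compat, pow_lt |]; lra.
Qed.
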